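(* Let $q \ge 2$ and $n$ be integers, let $k$ be an integer with $k \le \lfloor n/2\rfloor - 1$, and let $p_{k+1}, p_{k+2}, \dots, p_n$ be real numbers such that $p_i \ge 0$ for all $i \in [k+1, n-(k+1)]$. If $$\sum_{i=j}^{n} p_i \binom{n-j}{i-j} \le 0 \quad \text{for all } j \in [k+1, n],$$ and $$\sum_{i=\lfloor n/2\rfloor+1}^{n} p_i \left(q^{2i-n}-1\right)\binom{n}{i} > 0,$$ then $k$-uniform states in $(\mathbb{C}^q)^{\otimes n}$ do not exist.
   Context: For integers $a \le b$, $[a,b]$ denotes $\{a, a+1, \dots, b\}$. A pure state $|\psi\rangle \in (\mathbb{C}^q)^{\otimes n}$ is called $k$-uniform if, with $\rho = |\psi\rangle\langle\psi|$, for every subset $S \subseteq \{1,\dots,n\}$ with $|S| = k$ the reduced state of $\rho$ on the parties in $S$ equals $I/q^k$, where $I$ is the identity on $(\mathbb{C}^q)^{\otimes k}$. *)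

From HB Require Import structures.
From mathcomp Require Import all_boot all_order all_algebra.
From mathcomp Require Import reals.
From mathcomp.real_closed Require Import complex.
Set Implicit Arguments. Unset Strict Implicit. Unset Printing Implicit Defensive.
Import Order.TTheory GRing.Theory Num.Theory.
Local Open Scope ring_scope.

(* Computational basis of (C^q)^{\otimes n}: configurations 'I_n -> 'I_q.
   A vector of (C^q)^{\otimes n} is its coefficient function. *)
Definition config (n q : nat) := {ffun 'I_n -> 'I_q}.

Definition glue (n q : nat) (y : config n q) (S : {set 'I_n}) (z : config n q)
  : config n q := [ffun i => if i \in S then y i else z i].

Definition is_pure_state (R : realType) (n q : nat) (psi : config n q -> R[i]) :=
  \sum_(x : config n q) psi x * (psi x)^* = 1.

(* Matrix entry <x_S| Tr_{S^c} |psi><psi| |y_S> of the reduced state on S;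
   it only depends on the values of x and y on S. *)
Definition reduced_entry (R : realType) (n q : nat) (psi : config n q -> R[i])
  (S : {set 'I_n}) (x y : config n q) : R[i] :=
  \sum_(z : config n q | [forall i, (i \in S) ==> (z i == x i)])
     psi z * (psi (glue y S z))^*.

Definition k_uniform (R : realType) (n q k : nat) (psi : config n q -> R[i]) :=
  is_pure_state psi /\
  forall S : {set 'I_n}, #|S| = k ->
  forall x y : config n q,
    reduced_entry psi S x y =
      (if [forall i, (i \in S) ==> (x i == y i)] then (q%:R ^+ k)^-1 else 0).

(* Rains' shadow argument.  Put P(S) := q^|S| Tr rho_S^2.  Writing the swap of
   two copies of each site of S as (q SWAP - Id) + Id expands P(S) as
   sum_{T <= S} a(T), where a(T) is the expectation on psi (x) psi of a tensor
   product of copies of q SWAP - Id (on T) and Id; both are nonnegative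
   combinations of operators E (x) E^dagger, so a(T) is a sum of terms
   w |<psi|E|psi>|^2 >= 0.  Purity gives a(emptyset) = 1 and Tr rho_S^2 = Tr rho_{S^c}^2,
   i.e. P(S) = q^(2|S|-n) P(S^c); k-uniformity gives P(S) = 1 for |S| = k, hence
   a(T) = 0 for 0 < |T| <= k and P(S) = 1 for |S| <= k.  Now pair the weights
   p_i (i > k) with P: expanding P, every nonempty T contributes a(T) times a
   left-hand side of the first hypothesis, so sum_{|S|>k} p_|S| P(S) is at most
   sum_i p_i C(n,i); bounding P(S) below by q^(2|S|-n), with equality when
   |S| >= n-k (the only sizes where p may be negative), it is at least
   sum_i p_i q^(2i-n) C(n,i).  This contradicts the second hypothesis. *)

From HB Require Import structures.
From mathcomp Require Import all_boot all_order all_algebra.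
From mathcomp Require Import reals.
From mathcomp.real_closed Require Import complex.
From mathcomp Require Import ring zify.
Import Order.TTheory GRing.Theory Num.Theory.
Local Open Scope ring_scope.

Set Implicit Arguments. Unset Strict Implicit. Unset Printing Implicit Defensive.

Lemma sumr_delta (V : pzSemiRingType) (I : finType) (a : I) (F : I -> V) :
  \sum_c (a == c)%:R * F c = F a.
Proof.
rewrite (bigD1 a) //= eqxx mul1r big1 ?addr0 // => c.
by rewrite eq_sym => /negbTE ->; rewrite mul0r.
Qed.

Lemma natr_and (V : pzSemiRingType) (b1 b2 : bool) : ((b1 && b2)%:R : V) = b1%:R * b2%:R.
Proof. by rewrite -mulnb natrM. Qed.

Lemma prodr_natb (V : comPzSemiRingType) (I : finType) (b : I -> bool) :
  \prod_i ((b i)%:R : V) = [forall i, b i]%:R.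
Proof.
case: (boolP [forall i, b i]) => [/forallP bT | /forallPn[i /negbTE bi]].
  by rewrite big1 // => i _; rewrite bT.
by rewrite (bigD1 i) //= bi mul0r.
Qed.

Section QuarticForm.
Variables (C : numClosedFieldType) (I : finType) (psi : I -> C).

(* [quartic psi Phi] is <psi (x) psi| Phi |psi (x) psi> for the operator Phi with
   entries <u' v'| Phi |u v> = Phi u v u' v'. *)
Definition quartic (Phi : I -> I -> I -> I -> C) : C :=
  \sum_u \sum_v \sum_u' \sum_v' psi u * psi v * (psi u')^* * (psi v')^* * Phi u v u' v'.

Lemma eq_quartic (Phi1 Phi2 : I -> I -> I -> I -> C) :
  (forall u v u' v', Phi1 u v u' v' = Phi2 u v u' v') -> quartic Phi1 = quartic Phi2.
Proof. by move=> E; do 4!apply: eq_bigr => ? _; rewrite E. Qed.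

Lemma quartic_sum (J : finType) (P : pred J) (Phi : J -> I -> I -> I -> I -> C) :
  quartic (fun u v u' v' => \sum_(j | P j) Phi j u v u' v') = \sum_(j | P j) quartic (Phi j).
Proof.
rewrite /quartic.
under eq_bigr do under eq_bigr do under eq_bigr do under eq_bigr do rewrite mulr_sumr.
under eq_bigr do under eq_bigr do under eq_bigr do rewrite exchange_big.
under eq_bigr do under eq_bigr do rewrite exchange_big.
under eq_bigr do rewrite exchange_big.
by rewrite exchange_big.
Qed.

Lemma quarticZ (c : C) (Phi : I -> I -> I -> I -> C) :
  quartic (fun u v u' v' => c * Phi u v u' v') = c * quartic Phi.
Proof.
rewrite /quartic; do 4!(rewrite mulr_sumr; apply: eq_bigr => ? _).
by rewrite mulrCA.
Qed.

Lemma quartic_hermitian_square (A : I -> I -> C) :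
  quartic (fun u v u' v' => A u u' * (A v' v)^*) =
  `|\sum_u \sum_u' psi u * (psi u')^* * A u u'| ^+ 2.
Proof.
rewrite normCK /quartic mulr_suml; apply: eq_bigr => u _.
rewrite exchange_big mulr_suml; apply: eq_bigr => u' _.
rewrite !rmorph_sum mulr_sumr exchange_big; apply: eq_bigr => v _.
rewrite rmorph_sum mulr_sumr; apply: eq_bigr => v' _.
rewrite !rmorphM /= conjCK; ring.
Qed.

Lemma quartic_sos_ge0 (J : finType) (w : J -> C) (A : J -> I -> I -> C)
    (Phi : I -> I -> I -> I -> C) :
  (forall j, 0 <= w j) ->
  (forall u v u' v', Phi u v u' v' = \sum_j w j * (A j u u' * (A j v' v)^*)) ->
  0 <= quartic Phi.
Proof.
move=> w_ge0 PhiE; rewrite (eq_quartic PhiE) quartic_sum.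
apply: sumr_ge0 => j _; rewrite quarticZ quartic_hermitian_square.
by rewrite mulr_ge0 ?exprn_ge0.
Qed.

End QuarticForm.

Section ProductKernel.
Variables (C : numClosedFieldType) (D A : finType).

Definition prod_kernel (K : D -> A -> A -> A -> A -> C) (u v u' v' : {ffun D -> A}) : C :=
  \prod_i K i (u i) (v i) (u' i) (v' i).

Lemma quartic_prod_kernel_ge0 (J : finType) (w : D -> J -> C) (G : D -> J -> A -> A -> C)
    (K : D -> A -> A -> A -> A -> C) (psi : {ffun D -> A} -> C) :
  (forall i j, 0 <= w i j) ->
  (forall i a b a' b', K i a b a' b' = \sum_j w i j * (G i j a a' * (G i j b' b)^*)) ->
  0 <= quartic psi (prod_kernel K).
Proof.
move=> w_ge0 KE.
apply: (@quartic_sos_ge0 _ _ psi _ (fun f : {ffun D -> J} => \prod_i w i (f i))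
  (fun f x y => \prod_i G i (f i) (x i) (y i))) => [f | u v u' v'].
  by apply: prodr_ge0 => i _.
rewrite /prod_kernel; under eq_bigr do rewrite KE.
rewrite bigA_distr_bigA; apply: eq_bigr => f _.
by rewrite rmorph_prod -!big_split.
Qed.

End ProductKernel.

Section SiteKernels.
Variables (C : numClosedFieldType) (A : finType).
Local Notation d := (#|A|%:R : C).

Definition swap_kernel (a b a' b' : A) : C := ((a' == b) && (b' == a))%:R.
Definition id_kernel (a b a' b' : A) : C := ((a' == a) && (b' == b))%:R.
Definition shadow_kernel (a b a' b' : A) : C := d * swap_kernel a b a' b' - id_kernel a b a' b'.

Definition matrix_unit (cd : A * A) (x y : A) : C := ((x == cd.1) && (y == cd.2))%:R.
Definition traceless_diag (c x y : A) : C := (x == y)%:R * ((x == c)%:R - d^-1).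

Lemma natr_card_neq0 (a : A) : d != 0.
Proof. by rewrite pnatr_eq0 -lt0n; apply/card_gt0P; exists a. Qed.

Lemma offdiag_units_sum (a b a' b' : A) :
  \sum_(cd : A * A) (cd.1 != cd.2)%:R * (matrix_unit cd a a' * (matrix_unit cd b' b)^*)
  = (a != a')%:R * swap_kernel a b a' b'.
Proof.
rewrite -(pair_bigA _ (fun c e => (c != e)%:R * (matrix_unit (c, e) a a' *
  (matrix_unit (c, e) b' b)^*))) /=.
transitivity (\sum_c (a == c)%:R * \sum_e (a' == e)%:R *
  ((c != e)%:R * (b' == c)%:R * (b == e)%:R) : C).
  apply: eq_bigr => c _; rewrite mulr_sumr; apply: eq_bigr => e _.
  by rewrite /matrix_unit conjC_nat !natr_and /=; ring.
by rewrite sumr_delta sumr_delta /swap_kernel natr_and (eq_sym b) -mulrA (mulrC (b' == a)%:R).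
Qed.

Lemma traceless_diag_sum (a b a' b' : A) :
  \sum_c d * (traceless_diag c a a' * (traceless_diag c b' b)^*) =
  (a == a')%:R * (b' == b)%:R * (d * (a == b')%:R - 1).
Proof.
have d_neq0 := natr_card_neq0 a.
have sum_delta1 (x : A) : \sum_c ((x == c)%:R : C) = 1.
  by rewrite -[RHS](sumr_delta x (fun _ => 1)); apply: eq_bigr => c _; rewrite mulr1.
transitivity ((a == a')%:R * (b' == b)%:R * d *
  (\sum_c (a == c)%:R * (b' == c)%:R - d^-1 * \sum_c (b' == c)%:R
   - d^-1 * \sum_c ((a == c)%:R - d^-1)) : C).
  rewrite !mulr_sumr -!sumrB mulr_sumr; apply: eq_bigr => c _.
  rewrite /traceless_diag rmorphM rmorphB /= !conjC_nat fmorphV /= conjC_nat; ring.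
rewrite sumr_delta sumrB !sum_delta1 sumr_const -[_^-1 *+ _]mulr_natr mulVf //.
rewrite subrr mulr0 subr0 (eq_sym b' a); field; exact: d_neq0.
Qed.

(* q SWAP - Id = q sum_E E (x) E^dagger, E ranging over the off-diagonal matrix
   units and the traceless diagonal matrices e_c - Id/q. *)
Lemma shadow_kernel_sos (a b a' b' : A) : shadow_kernel a b a' b' =
  \sum_(cd : A * A) d * (cd.1 != cd.2)%:R * (matrix_unit cd a a' * (matrix_unit cd b' b)^*)
  + \sum_c d * (traceless_diag c a a' * (traceless_diag c b' b)^*).
Proof.
under eq_bigr do rewrite -mulrA.
rewrite -[X in X + _]mulr_sumr offdiag_units_sum traceless_diag_sum.
rewrite /shadow_kernel /swap_kernel /id_kernel !natr_and.
case: (eqVneq a a') => [<-|_] /=; last by ring.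
case: (eqVneq b' b) => [<-|/negbTE bb'] /=.
  by rewrite (eq_sym b'); case: (a == b') => /=; ring.
by case: (eqVneq b' a) => [<-|_]; rewrite /= ?bb' /=; ring.
Qed.

Lemma id_kernel_sos (a b a' b' : A) :
  id_kernel a b a' b' = \sum_(c : A) d^-1 * ((a == a')%:R * ((b' == b)%:R)^*).
Proof.
rewrite sumr_const -[(_ * _) *+ _]mulr_natl mulrA -[#|xpredT|]/#|A|.
rewrite mulfV ?natr_card_neq0 // mul1r conjC_nat.
by rewrite /id_kernel natr_and (eq_sym a') (eq_sym b').
Qed.

Definition site_weight (t : bool) (j : (A * A) + A) : C :=
  match j with
  | inl cd => if t then d * (cd.1 != cd.2)%:R else 0
  | inr _ => if t then d else d^-1
  end.

Definition site_factor (t : bool) (j : (A * A) + A) (x y : A) : C :=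
  match j with
  | inl cd => matrix_unit cd x y
  | inr c => if t then traceless_diag c x y else (x == y)%:R
  end.

Lemma site_weight_ge0 t j : 0 <= site_weight t j.
Proof. by case: j => [cd|c]; case: t; rewrite /= ?mulr_ge0 ?invr_ge0 ?ler0n. Qed.

Lemma site_kernel_sos (t : bool) (a b a' b' : A) :
  (if t then shadow_kernel else id_kernel) a b a' b' =
  \sum_j site_weight t j * (site_factor t j a a' * (site_factor t j b' b)^*).
Proof.
rewrite big_sumType /=; case: t; first exact: shadow_kernel_sos.
by rewrite big1 ?add0r ?id_kernel_sos // => cd _; rewrite mul0r.
Qed.

End SiteKernels.

Arguments swap_kernel {C A}.
Arguments id_kernel {C A}.
Arguments shadow_kernel {C A}.
Arguments site_weight {C A}.
Arguments site_factor {C A}.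

Lemma card_agree (D A : finType) (S : {set D}) (x : {ffun D -> A}) :
  #|[pred z : {ffun D -> A} | [forall i in S, z i == x i]]| = (#|A| ^ #|~: S|)%N.
Proof.
pose F i : pred A := if i \in S then pred1 (x i) else predT.
transitivity #|(family F : simpl_pred {dffun forall i : D, A})|.
  apply: eq_card => z; rewrite !inE.
  by apply/forallP/familyP => E i; have := E i; rewrite /F; case: (i \in S).
rewrite card_family foldrE big_map big_enum -prod_nat_const [RHS]big_mkcond /=.
by apply: eq_bigr => i _; rewrite /F in_setC; case: (i \in S); rewrite /= ?card1.
Qed.

Lemma sum_agree (C : pzSemiRingType) (D A : finType) (S : {set D})
    (F : {ffun D -> A} -> {ffun D -> A} -> C) :
  (forall x u : {ffun D -> A}, [forall i in S, u i == x i] -> F x u = F u u) ->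
  \sum_(x : {ffun D -> A}) \sum_(u : {ffun D -> A} | [forall i in S, u i == x i]) F x u =
  (\sum_u F u u) *+ (#|A| ^ #|~: S|).
Proof.
move=> FE; rewrite (exchange_big_dep xpredT) //= -sumrMnl; apply: eq_bigr => u _.
rewrite (eq_bigr (fun _ => F u u)) => [|x]; last exact: FE.
rewrite sumr_const -(card_agree S u); congr (_ *+ _); apply: eq_card => x.
by rewrite !inE; apply: eq_forallb => i; rewrite eq_sym.
Qed.

Section ShadowCoefficients.
Variables (C : numClosedFieldType) (D A : finType) (psi : {ffun D -> A} -> C).

Definition shadow (T : {set D}) : C :=
  quartic psi (prod_kernel (fun i => if i \in T then shadow_kernel else id_kernel)).

(* Tr rho_S^2 by the swap trick, see [purity_glue]. *)
Definition purity (S : {set D}) : C :=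
  quartic psi (prod_kernel (fun i => if i \in S then swap_kernel else id_kernel)).

Lemma shadow_ge0 (T : {set D}) : 0 <= shadow T.
Proof.
rewrite /shadow; apply: (@quartic_prod_kernel_ge0 _ _ _ _ (fun i => site_weight (i \in T))
  (fun i => site_factor (i \in T))) => [i j|i a b a' b'].
  exact: site_weight_ge0.
exact: site_kernel_sos.
Qed.

Lemma purity_expand (S : {set D}) :
  #|A|%:R ^+ #|S| * purity S = \sum_(T : {set D} | T \subset S) shadow T.
Proof.
rewrite -quarticZ -quartic_sum; apply: eq_quartic => u v u' v'.
rewrite /prod_kernel -prodr_const big_mkcond /= -big_split /=.
pose F i (a b a' b' : A) : C := if i \in S then shadow_kernel a b a' b' else 0.
rewrite (eq_bigr (fun i => F i (u i) (v i) (u' i) (v' i) + id_kernel (u i) (v i) (u' i) (v' i)));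
  last by move=> i _; rewrite /F; case: (i \in S); rewrite ?mul1r ?add0r ?subrK.
rewrite bigA_distr [RHS]big_mkcond /=; apply: eq_bigr => T _.
case: ifP => [TS | /negbT/subsetPn[i iT iS]].
  by apply: eq_bigr => i _; rewrite /F; case: ifP => // iT; rewrite (subsetP TS i iT).
by rewrite (bigD1 i) //= iT /F (negbTE iS) mul0r.
Qed.

End ShadowCoefficients.

Section PurityOfConfigurations.
Variables (C : numClosedFieldType) (n q : nat) (psi : config n q -> C).
Local Notation cfg := (config n q).

Lemma glue_setC (S : {set 'I_n}) (u v : cfg) : glue v (~: S) u = glue u S v.
Proof. by apply/ffunP => i; rewrite !ffunE in_setC; case: (i \in S). Qed.

Lemma glue_set0 (u v : cfg) : glue v set0 u = u.
Proof. by apply/ffunP => i; rewrite !ffunE in_set0. Qed.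

Lemma glue_agree (S : {set 'I_n}) (x u v : cfg) :
  [forall i in S, u i == x i] -> glue x S v = glue u S v.
Proof.
move=> /forallP ux; apply/ffunP => i; rewrite !ffunE.
by case: ifP => // iS; have /implyP/(_ iS)/eqP-> := ux i.
Qed.

Lemma prod_kernel_swap (S : {set 'I_n}) (u v u' v' : cfg) :
  prod_kernel (fun i => if i \in S then swap_kernel else id_kernel) u v u' v' =
  ((u' == glue v S u) && (v' == glue u S v))%:R :> C.
Proof.
transitivity (\prod_i (((u' i == glue v S u i) && (v' i == glue u S v i))%:R : C)).
  by apply: eq_bigr => i _; rewrite !ffunE; case: (i \in S).
rewrite prodr_natb; congr (nat_of_bool _)%:R.
apply/forallP/andP => [E|[/eqP-> /eqP->] i]; last by rewrite !eqxx.
by split; apply/eqP/ffunP => i; case/andP: (E i) => /eqP ? /eqP ?.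
Qed.

Lemma purity_glue (S : {set 'I_n}) : purity psi S =
  \sum_u \sum_v psi u * psi v * (psi (glue v S u))^* * (psi (glue u S v))^*.
Proof.
rewrite /purity /quartic; apply: eq_bigr => u _; apply: eq_bigr => v _.
transitivity (\sum_u' (glue v S u == u')%:R * \sum_v' (glue u S v == v')%:R *
  (psi u * psi v * (psi u')^* * (psi v')^*)).
  apply: eq_bigr => u' _; rewrite mulr_sumr; apply: eq_bigr => v' _.
  by rewrite prod_kernel_swap natr_and !(eq_sym (glue _ _ _)); ring.
by rewrite !sumr_delta.
Qed.

Lemma purity_setC (S : {set 'I_n}) : purity psi (~: S) = purity psi S.
Proof.
rewrite !purity_glue exchange_big; apply: eq_bigr => v _; apply: eq_bigr => u _.
by rewrite !glue_setC; ring.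
Qed.


Lemma scaled_purity_setC (S : {set 'I_n}) : (n <= 2 * #|S|)%N ->
  q%:R ^+ #|S| * purity psi S = q%:R ^+ (2 * #|S| - n) * (q%:R ^+ #|~: S| * purity psi (~: S)).
Proof.
move=> nS; rewrite purity_setC mulrA -exprD; congr (_ ^+ _ * _).
by have := cardsC S; rewrite card_ord; lia.
Qed.

End PurityOfConfigurations.

Section UniformStates.
Variables (R : realType) (n q : nat) (psi : config n q -> R[i]).
Local Notation cfg := (config n q).

Lemma purity_set0 : is_pure_state psi -> purity psi set0 = 1.
Proof.
move=> pure; rewrite purity_glue.
under eq_bigr do under eq_bigr do rewrite !glue_set0.
rewrite -[1]mulr1 -{1}pure -{1}pure mulr_suml; apply: eq_bigr => u _.
by rewrite mulr_sumr; apply: eq_bigr => v _; ring.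
Qed.

Lemma shadow_set0 : is_pure_state psi -> shadow psi set0 = 1.
Proof.
move=> pure; have := purity_expand psi set0.
by rewrite cards0 expr0 mul1r purity_set0 // (big_pred1 set0) // => T; apply: subset0.
Qed.

(* [reduced_entry] indexes rho_S by full configurations, so each entry of rho_S
   is repeated q^|~S| times in each index. *)
Lemma sum_reduced_entry_sqr (S : {set 'I_n}) :
  \sum_x \sum_y reduced_entry psi S x y * reduced_entry psi S y x =
  purity psi S *+ (q ^ #|~: S|) *+ (q ^ #|~: S|).
Proof.
transitivity (\sum_(x : cfg) \sum_(u : cfg | [forall i in S, u i == x i]) \sum_(y : cfg)
  \sum_(v : cfg | [forall i in S, v i == y i])
  psi u * (psi (glue y S u))^* * (psi v * (psi (glue x S v))^*)).
  apply: eq_bigr => x _; rewrite exchange_big; apply: eq_bigr => y _.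
  by rewrite /reduced_entry big_distrlr.
rewrite sum_agree => [|x u ux]; last by under eq_bigr do under eq_bigr do rewrite (glue_agree _ ux).
rewrite card_ord purity_glue; congr (_ *+ _); rewrite -sumrMnl; apply: eq_bigr => u _.
rewrite sum_agree ?card_ord => [|y v vy]; last by rewrite (glue_agree u vy).
by congr (_ *+ _); apply: eq_bigr => v _; ring.
Qed.

Lemma purity_k_uniform (k : nat) (S : {set 'I_n}) :
  (0 < q)%N -> k_uniform k psi -> #|S| = k -> purity psi S = (q%:R ^+ k)^-1.
Proof.
move=> q_gt0 [_ unif] Sk.
pose c : R[i] := (q%:R ^+ k)^-1.
have q_neq0 : q%:R != 0 :> R[i] by rewrite pnatr_eq0 -lt0n.
have qn : (q ^ n = q ^ k * q ^ #|~: S|)%N by rewrite -expnD -Sk cardsC card_ord.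
have E := sum_reduced_entry_sqr S.
have uniform_sum : \sum_x \sum_y reduced_entry psi S x y * reduced_entry psi S y x =
    \sum_(x : cfg) \sum_(y : cfg | [forall i in S, y i == x i]) c * c.
  apply: eq_bigr => x _; rewrite [RHS]big_mkcond; apply: eq_bigr => y _ /=.
  rewrite !unif //.
  have -> : [forall i in S, x i == y i] = [forall i in S, y i == x i].
    by apply: eq_forallb => i; rewrite eq_sym.
  by case: ifP; rewrite ?mulr0.
rewrite uniform_sum sum_agree // sumr_const card_ffun !card_ord qn mulrnA in E.
have N_gt0 : (0 < q ^ #|~: S|)%N by rewrite expn_gt0 q_gt0.
move/(pmulrnI N_gt0)/(pmulrnI N_gt0): E => <-.
by rewrite -[c * c *+ _]mulr_natr natrX -mulrA mulVf ?mulr1 // expf_neq0.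
Qed.

End UniformStates.

Section SubsetSums.
Variables (V : nmodType) (D : finType).

Lemma sum_subsets_card (B : {set D}) (F : nat -> V) :
  \sum_(S : {set D} | S \subset B) F #|S| = \sum_(m < #|B|.+1) F m *+ 'C(#|B|, m).
Proof.
rewrite (partition_big (fun S : {set D} => inord #|S| : 'I_#|B|.+1) xpredT) //=.
apply: eq_bigr => m _; rewrite -cards_draws cardsE -sumr_const.
apply: eq_big => [S|S /andP[SB /eqP <-]]; last by rewrite inordK // ltnS subset_leq_card.
rewrite unfold_in /=; apply: andb_id2l => SB.
have S_lt : (#|S| < #|B|.+1)%N by rewrite ltnS subset_leq_card.
by apply/eqP/eqP => [<-|Sm]; [rewrite inordK | apply: val_inj; rewrite /= inordK].
Qed.

Lemma sum_supsets_card (T : {set D}) (F : nat -> V) :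
  \sum_(S : {set D} | T \subset S) F #|S| =
  \sum_(#|T| <= i < #|D|.+1) F i *+ 'C(#|D| - #|T|, i - #|T|).
Proof.
have cardTC : #|~: T| = (#|D| - #|T|)%N by rewrite cardsCs setCK.
rewrite (reindex_onto (fun U => T :|: U) (fun S => S :\: T)) /=; last first.
  by move=> S TS; rewrite -{2}(setID S T) (setIidPr TS).
rewrite (eq_bigl (fun U : {set D} => U \subset ~: T)) => [|U]; last first.
  rewrite subsetUl /= setDUl setDv set0U subsetC -disjoints_subset disjoint_sym.
  exact: (sameP eqP setDidPl).
rewrite (eq_bigr (fun U : {set D} => F (#|T| + #|U|)%N)) => [|U]; last first.
  by rewrite subsetC -disjoints_subset => /disjoint_setI0 TU; rewrite cardsU TU cards0 subn0.
rewrite (sum_subsets_card _ (fun m => F (#|T| + m)%N)) cardTC.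
rewrite -[in RHS](add0n #|T|) big_addn !add0n -subSn ?max_card // big_mkord.
by apply: eq_bigr => m _; rewrite addnC addnK.
Qed.

Lemma exists_supset_card (T : {set D}) (m : nat) :
  (#|T| <= m <= #|D|)%N -> exists2 S : {set D}, T \subset S & #|S| = m.
Proof.
case/andP => Tm mD.
have : (0 < #|[set U : {set D} | U \subset ~: T & #|U| == m - #|T|]|)%N.
  by rewrite cards_draws bin_gt0 [#|~: T|]cardsCs setCK; lia.
case/card_gt0P => U; rewrite inE => /andP[UTc /eqP Um].
exists (T :|: U); first exact: subsetUl.
move: UTc; rewrite -disjoints_subset disjoint_sym => /disjoint_setI0 TU.
by rewrite cardsU TU cards0 subn0 Um; lia.
Qed.

End SubsetSums.

Section ShadowInequality.
Variables (K : numDomainType) (n k : nat) (Q : K) (P a : {set 'I_n} -> K) (p : nat -> K).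
Hypothesis k_le_half : (2 * k <= n)%N.
Hypothesis Q_ge0 : 0 <= Q.
Hypothesis P_sum : forall S, P S = \sum_(T : {set 'I_n} | T \subset S) a T.
Hypothesis a_ge0 : forall T, 0 <= a T.
Hypothesis a_set0 : a set0 = 1.
Hypothesis P_card_k : forall S : {set 'I_n}, #|S| = k -> P S = 1.
Hypothesis P_setC : forall S : {set 'I_n},
  (n <= 2 * #|S|)%N -> P S = Q ^+ (2 * #|S| - n) * P (~: S).
Hypothesis p_ge0 : forall i, (k.+1 <= i)%N -> (i <= n - k.+1)%N -> 0 <= p i.
Hypothesis p_shadow : forall j, (k.+1 <= j)%N -> (j <= n)%N ->
  \sum_(j <= i < n.+1) p i * ('C(n - j, i - j))%:R <= 0.

Lemma P_split (S : {set 'I_n}) :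
  P S = 1 + \sum_(T : {set 'I_n} | (T \subset S) && (T != set0)) a T.
Proof. by rewrite P_sum (bigD1 set0) ?sub0set // a_set0. Qed.

Lemma P_ge1 (S : {set 'I_n}) : 1 <= P S.
Proof. by rewrite P_split lerDl sumr_ge0. Qed.

Lemma shadow_small_eq0 (T : {set 'I_n}) : (0 < #|T| <= k)%N -> a T = 0.
Proof.
case/andP => T_gt0 Tk.
have [|S TS Sk] := exists_supset_card (m := k) (T := T); first by rewrite card_ord Tk; lia.
have := P_card_k Sk; rewrite P_split (bigD1 T) /= ?TS -?card_gt0 //.
rewrite -[RHS]addr0 => /addrI/eqP; rewrite paddr_eq0 ?sumr_ge0 //.
by case/andP => /eqP.
Qed.

Lemma P_small (S : {set 'I_n}) : (#|S| <= k)%N -> P S = 1.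
Proof.
move=> Sk; rewrite P_split big1 ?addr0 // => T /andP[TS T0].
by rewrite shadow_small_eq0 // card_gt0 T0 (leq_trans (subset_leq_card TS)).
Qed.

(* For 2|S| <= n the exponent truncates to 0 and this is just 1 <= P S. *)
Lemma P_ge_pow (S : {set 'I_n}) : Q ^+ (2 * #|S| - n) <= P S.
Proof.
case: (leqP n (2 * #|S|)) => [nS | Sn].
  by rewrite P_setC // ler_peMr ?exprn_ge0 ?P_ge1.
by rewrite (_ : 2 * #|S| - n = 0)%N ?expr0 ?P_ge1 //; lia.
Qed.

Lemma P_large (S : {set 'I_n}) : (n - k <= #|S|)%N -> P S = Q ^+ (2 * #|S| - n).
Proof.
have cardSC : #|~: S| = (n - #|S|)%N by rewrite [#|~: S|]cardsCs setCK card_ord.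
move=> Sk; rewrite P_setC ?P_small ?mulr1 // ?cardSC; lia.
Qed.

Let F i := if (k < i)%N then p i else 0.

Lemma sum_P_le : \sum_(S : {set 'I_n}) F #|S| * P S <= \sum_(S : {set 'I_n}) F #|S|.
Proof.
have -> : \sum_(S : {set 'I_n}) F #|S| * P S =
    \sum_(T : {set 'I_n}) a T * \sum_(S : {set 'I_n} | T \subset S) F #|S|.
  under eq_bigr do rewrite P_sum mulr_sumr.
  rewrite (exchange_big_dep xpredT) //=; apply: eq_bigr => T _.
  by rewrite mulr_sumr; apply: eq_bigr => S _; rewrite mulrC.
rewrite (bigD1 set0) //= a_set0 mul1r (eq_bigl xpredT) => [|S]; last exact: sub0set.
rewrite gerDl; apply: sumr_le0 => T T0.
case: (leqP #|T| k) => [Tk | kT].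
  by rewrite shadow_small_eq0 ?mul0r // card_gt0 T0.
rewrite mulr_ge0_le0 // sum_supsets_card card_ord.
rewrite (eq_big_nat _ _ (F2 := fun i => p i * ('C(n - #|T|, i - #|T|))%:R)).
  by apply: p_shadow => //; have := max_card T; rewrite card_ord.
by move=> i /andP[Ti _]; rewrite /F ifT ?mulr_natr //; lia.
Qed.

Lemma sum_pow_le_P :
  \sum_(S : {set 'I_n}) F #|S| * Q ^+ (2 * #|S| - n) <= \sum_(S : {set 'I_n}) F #|S| * P S.
Proof.
apply: ler_sum => S _; rewrite /F; case: ifP => kS; last by rewrite !mul0r.
case: (leqP (n - k) #|S|) => [Sl | Ss]; first by rewrite P_large.
by rewrite ler_wpM2l ?P_ge_pow // p_ge0 //; lia.
Qed.

Theorem shadow_inequality :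
  \sum_(n./2.+1 <= i < n.+1) p i * (Q ^+ (2 * i - n) - 1) * ('C(n, i))%:R <= 0.
Proof.
have <- : \sum_(S : {set 'I_n}) F #|S| * (Q ^+ (2 * #|S| - n) - 1) =
    \sum_(n./2.+1 <= i < n.+1) p i * (Q ^+ (2 * i - n) - 1) * ('C(n, i))%:R.
  rewrite (eq_bigl (fun S : {set 'I_n} => set0 \subset S)) => [|S]; last by rewrite sub0set.
  rewrite (sum_supsets_card _ (fun m => F m * (Q ^+ (2 * m - n) - 1))) cards0 card_ord.
  rewrite (big_cat_nat _ (n := n./2.+1)) //=; last by lia.
  rewrite big_nat big1 ?add0r => [|i /andP[_ i_le]]; last first.
    by rewrite (_ : 2 * i - n = 0)%N ?expr0 ?subrr ?mulr0 ?mul0rn //; lia.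
  apply: eq_big_nat => i /andP[i_gt _].
  by rewrite /F ifT ?subn0 ?mulr_natr //; lia.
under eq_bigr do rewrite mulrBr mulr1.
by rewrite sumrB subr_le0 (le_trans sum_pow_le_P sum_P_le).
Qed.

End ShadowInequality.

Unset Implicit Arguments.

Theorem lemma1 (R : realType) (q n k : nat) (p : nat -> R) :
  (2 <= q)%N ->
  (k.+1 <= n./2)%N ->
  (forall i : nat, (k.+1 <= i)%N -> (i <= n - k.+1)%N -> 0 <= p i) ->
  (forall j : nat, (k.+1 <= j)%N -> (j <= n)%N ->
     \sum_(j <= i < n.+1) p i * ('C(n - j, i - j))%:R <= 0) ->
  0 < \sum_(n./2.+1 <= i < n.+1)
        p i * ((q%:R : R) ^+ (2 * i - n) - 1) * ('C(n, i))%:R ->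
  ~ exists psi : config n q -> R[i], k_uniform k psi.
Proof.
move=> q_ge2 k_lt p_ge0 p_shadow p_pos [psi psi_unif].
have q_gt0 : (0 < q)%N by lia.
apply/negP: p_pos; rewrite -leNgt -(lecR _ 0) rmorph0 rmorph_sum /=.
under eq_bigr do rewrite !rmorphM rmorphB rmorphXn !rmorph_nat rmorph1 /=.
apply: (shadow_inequality (k := k) (P := fun S => q%:R ^+ #|S| * purity psi S) (a := shadow psi)).
- by lia.
- exact: ler0n.
- by move=> S; rewrite -purity_expand card_ord.
- exact: shadow_ge0.
- by apply: shadow_set0; case: psi_unif.
- move=> S Sk; rewrite (purity_k_uniform q_gt0 psi_unif Sk) Sk.
  by rewrite mulfV // expf_neq0 // pnatr_eq0 -lt0n.
- exact: scaled_purity_setC.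
- by move=> i ki ik; rewrite lecR p_ge0.
move=> j kj jn; have := p_shadow j kj jn; rewrite -(lecR _ 0) rmorph0 rmorph_sum /=.
by under eq_bigr do rewrite rmorphM rmorph_nat.
Qed.
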